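(* Let $q$ be a prime power and $m$ a positive integer with $\gcd(m,q)=1$, and let $R=\mathbb{F}_q[x]/\langle x^m-1\rangle$. Let $C$ and $D$ be one-generator quasi-cyclic codes of length $2m$ and index $2$ over $\mathbb{F}_q$, i.e. $C$ is the $R$-submodule of $R^2$ generated by $(g_{11}(x),g_{12}(x))$ and $D$ is the $R$-submodule generated by $(f_{11}(x),f_{12}(x))$, where $g_{11}(x)\mid x^m-1$ and $f_{11}(x)\mid x^m-1$. Then $(C,D)$ is a linear complementary pair of codes if and only if all of the following hold: (A) $\gcd(g_{11}(x),g_{12}(x))=1$; (B) $\gcd(f_{11}(x),f_{12}(x))=1$; (C) $\gcd\big(x^m-1,\,g_{11}(x)f_{12}(x)-g_{12}(x)f_{11}(x)\big)=1$.
   Context: A pair $(C,D)$ of $\mathbb{F}_q$-linear codes of the same length $n$ is a linear complementary pair (LCP) of codes if $C\cap D=\{0\}$ and $C+D=\mathbb{F}_q^n$. A quasi-cyclic code of length $2m$ and index $2$ is identified with an $R$-submodule of $R^2$ via $(c_{0,0},c_{0,1},c_{1,0},c_{1,1},\dots,c_{m-1,0},c_{m-1,1})\mapsto(c_0(x),c_1(x))$ with $c_j(x)=\sum_{i=0}^{m-1}c_{i,j}x^i$; elements of $R$ are represented by polynomials in $\mathbb{F}_q[x]$. *)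

From HB Require Import structures.
From mathcomp Require Import all_boot all_order all_algebra all_field.
Set Implicit Arguments. Unset Strict Implicit. Unset Printing Implicit Defensive.
Import GRing.Theory.
Local Open Scope ring_scope.

(* The modulus x^m - 1. Elements of R = F[x]/<x^m-1> are represented by
   their reduced representatives p (i.e. p %% (x^m-1) = p, size p <= m). *)
Definition xm1 (F : fieldType) (m : nat) : {poly F} := 'X^m - 1.

Definition reduced (F : fieldType) (m : nat) (p : {poly F}) : Prop :=
  p %% xm1 F m = p.

(* An element of R^2 = a quasi-cyclic word of length 2m, index 2, via
   (c_{i,j}) |-> (c_0(x), c_1(x)). *)
Definition inR2 (F : fieldType) (m : nat) (c : {poly F} * {poly F}) : Prop :=
  reduced m c.1 /\ reduced m c.2.

Definition qc_code1 (F : fieldType) (m : nat) (g1 g2 : {poly F})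
  (c : {poly F} * {poly F}) : Prop :=
  exists a : {poly F}, c = ((a * g1) %% xm1 F m, (a * g2) %% xm1 F m).

Definition LCP (F : fieldType) (m : nat)
  (C D : {poly F} * {poly F} -> Prop) : Prop :=
  (forall c, C c -> D c -> c = (0, 0)) /\
  (forall c, inR2 m c ->
     exists c1 c2, C c1 /\ D c2 /\ c = (c1.1 + c2.1, c1.2 + c2.2)).

From HB Require Import structures.
From mathcomp Require Import all_boot all_order all_algebra all_field.
From mathcomp Require Import ring.
Import GRing.Theory.
Local Open Scope ring_scope.

(* Write [det = g11 f12 - g12 f11] for the determinant of the generator matrix
   [[g11, g12], [f11, f12]].  If [det] is a unit modulo x^m - 1, Cramer's rule
   inverts that matrix over R, so C ∩ D = 0 and C + D = R^2.  Conversely, let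
   d divide both x^m - 1 and [det].  Every codeword of C + D is orthogonal
   modulo d to any pair (s, t) orthogonal modulo d to both generators; when
   C + D = R^2 this forces d | s and d | t.  The pairs (g12, -g11), (f12, -f11)
   and then (1, 0) are such pairs, so d | 1.  Conditions (A) and (B) follow from
   (C) since g11 and f11 divide x^m - 1. *)

Lemma dvdp_sub_of_modp_eq {F : fieldType} {d p q : {poly F}} :
  p %% d = q %% d -> d %| p - q.
Proof. by move=> epq; apply/modp_eq0P; rewrite modpD modpN epq subrr. Qed.

Lemma coprimep_rows_of_det {F : fieldType} (M a b c d : {poly F}) :
  coprimep M (a * d - b * c) ->
  (a %| M -> coprimep a b) /\ (c %| M -> coprimep c d).
Proof.
move=> /coprimepP cop; split=> rowM; apply/coprimepP => e e1 e2; apply: cop.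
- exact: dvdp_trans rowM.
- by rewrite dvdp_sub ?dvdp_mulr.
- exact: dvdp_trans rowM.
- by rewrite dvdp_sub ?dvdp_mull.
Qed.

Section OneGeneratorQuasiCyclic.

Variables (F : fieldType) (m : nat).
Hypothesis m_gt0 : (0 < m)%N.

Local Notation M := (xm1 F m).

Lemma reduced0 : reduced m (0 : {poly F}).
Proof. exact: mod0p. Qed.

Lemma reduced1 : reduced m (1 : {poly F}).
Proof. by rewrite /reduced modp_small // size_poly1 /xm1 size_XnsubC. Qed.

Lemma qc_code1_dvdp_orth (d s t g1 g2 : {poly F}) (c : {poly F} * {poly F}) :
  d %| M -> d %| s * g1 + t * g2 -> qc_code1 m g1 g2 c ->
  d %| s * c.1 + t * c.2.
Proof.
move=> dM dg [a ->] /=.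
rewrite (dvdp_mod _ dM) modpD !modp_mul -modpD -(dvdp_mod _ dM).
have -> : s * (a * g1) + t * (a * g2) = a * (s * g1 + t * g2) by ring.
exact: dvdp_mull.
Qed.

Variables g11 g12 f11 f12 : {poly F}.

Local Notation C := (qc_code1 m g11 g12).
Local Notation D := (qc_code1 m f11 f12).
Local Notation det := (g11 * f12 - g12 * f11).

Definition qc_spans :=
  forall c, inR2 m c -> exists c1 c2, C c1 /\ D c2 /\ c = (c1.1 + c2.1, c1.2 + c2.2).

Lemma qc_spans_dvdp_orth (d s t : {poly F}) : qc_spans ->
  d %| M -> d %| s * g11 + t * g12 -> d %| s * f11 + t * f12 ->
  d %| s /\ d %| t.
Proof.
move=> spans dM dg df.
have orth c : inR2 m c -> d %| s * c.1 + t * c.2.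
  move=> /spans [c1 [c2 [Cc1 [Dc2 ->]]]] /=.
  have -> : s * (c1.1 + c2.1) + t * (c1.2 + c2.2) =
            (s * c1.1 + t * c1.2) + (s * c2.1 + t * c2.2) by ring.
  by rewrite dvdp_add //; [apply: qc_code1_dvdp_orth Cc1 | apply: qc_code1_dvdp_orth Dc2].
split.
- by have := orth (1, 0) (conj reduced1 reduced0); rewrite /= mulr1 mulr0 addr0.
- by have := orth (0, 1) (conj reduced0 reduced1); rewrite /= mulr1 mulr0 add0r.
Qed.

Lemma coprimep_det_of_qc_spans : qc_spans -> coprimep M det.
Proof.
move=> spans; apply/coprimepP => d dM ddet.
have [dg12 dg11] : d %| g12 /\ d %| - g11.
  apply: qc_spans_dvdp_orth => //; first by rewrite mulNr mulrC subrr dvdp0.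
  by rewrite mulNr mulrC [f11 * _]mulrC -opprB dvdpNr.
have [_ df11] : d %| f12 /\ d %| - f11.
  apply: qc_spans_dvdp_orth => //; last by rewrite mulNr mulrC subrr dvdp0.
  by rewrite mulNr [f12 * _]mulrC [f11 * _]mulrC.
have [d1 _] : d %| 1 /\ d %| 0.
  by apply: qc_spans_dvdp_orth; rewrite // mul1r mul0r addr0 -dvdpNr.
by rewrite /eqp d1 dvd1p.
Qed.

Lemma qc_code1_meet0_of_coprimep_det :
  coprimep M det -> forall c, C c -> D c -> c = (0, 0).
Proof.
move=> cop c [a ->] [b [e1 e2]].
have dM1 := dvdp_sub_of_modp_eq e1; have dM2 := dvdp_sub_of_modp_eq e2.
suff Ma : M %| a by rewrite !modp_eq0 // dvdp_mulr.
rewrite -(Gauss_dvdpl _ cop).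
have -> : a * det = f12 * (a * g11 - b * f11) - f11 * (a * g12 - b * f12) by ring.
by rewrite dvdp_sub // dvdp_mull.
Qed.

Lemma qc_spans_of_coprimep_det : coprimep M det -> qc_spans.
Proof.
case/Bezout_eq1_coprimepP => [[u v]] /= uv [c1 c2] [/= r1 r2].
have vdet : v * det = 1 - u * M by rewrite -uv; ring.
set a := v * (c1 * f12 - c2 * f11); set b := v * (g11 * c2 - g12 * c1).
exists ((a * g11) %% M, (a * g12) %% M), ((b * f11) %% M, (b * f12) %% M).
split; first by exists a.
split; first by exists b.
have cramer c : (c * (v * det)) %% M = c %% M.
  by rewrite vdet mulrBr mulr1 modpD modpN mulrA modp_mull subr0.
rewrite /= -!modpD; congr pair; [rewrite -[LHS]r1 | rewrite -[LHS]r2].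
all: by rewrite -cramer; congr modp; rewrite /a /b; ring.
Qed.

Lemma LCP_qc_code1 : LCP m C D <-> coprimep M det.
Proof.
split=> [[_ spans] | cop]; first exact: coprimep_det_of_qc_spans.
split; [exact: qc_code1_meet0_of_coprimep_det | exact: qc_spans_of_coprimep_det].
Qed.

End OneGeneratorQuasiCyclic.

Theorem theorem4p3 (F : finFieldType) (m : nat) (g11 g12 f11 f12 : {poly F}) :
  (0 < m)%N -> coprime m #|F| ->
  g11 %| xm1 F m -> f11 %| xm1 F m ->
  LCP m (qc_code1 m g11 g12) (qc_code1 m f11 f12) <->
  [/\ coprimep g11 g12, coprimep f11 f12 &
      coprimep (xm1 F m) (g11 * f12 - g12 * f11)].
Proof.
move=> m_gt0 _ g11M f11M; rewrite LCP_qc_code1 //.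
split=> [cop | [_ _ //]]; case/coprimep_rows_of_det: (cop) => g_cop f_cop.
by split; [exact: g_cop | exact: f_cop |].
Qed.
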